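(* Let $(E,\mathcal{E},\nu)$ be a $\sigma$-finite measure space, $\phi$ a Young function satisfying the $\Delta_2$-condition, $w$ a weight function, and $\Psi:E\to E$ a non-singular measurable transformation such that the composition operator $C_\Psi f=f\circ\Psi$ is a bounded linear operator on the Orlicz-Lorentz space $L_{(\phi,w)}$. If $\Psi$ is pre-positive, then $\mathcal{A}(C_\Psi)=0$.
   Context: A Young function is a convex $\phi:[0,\infty)\to[0,\infty)$ with $\phi(x)=0\iff x=0$ and $\lim_{x\to\infty}\phi(x)=\infty$; $\Delta_2$-condition: $\phi(2x)\le k\phi(x)$ for some $k>0$ and all $x>0$. A weight function is a non-increasing locally integrable $w:(0,\infty)\to(0,\infty)$ with $\int_0^\infty w=\infty$. For measurable $f$, $\nu_f(s)=\nu\{|f|>s\}$, $f^*(t)=\inf\{s>0:\nu_f(s)\le t\}$; $L_{(\phi,w)}$ is the space of measurable $f:E\to\mathbb{C}$ with $\int_0^\infty\phi(\alpha f^*(t))w(t)\,dt<\infty$ for some $\alpha>0$, with the Luxemburg norm. $\Psi$ non-singular: $\nu(\Psi^{-1}(S))=0$ whenever $\nu(S)=0$. $\Psi$ is pre-positive if $\nu(\Psi^{-1}(A))>0$ whenever $\nu(A)>0$. The ascent $\mathcal{A}(T)$ is the smallest non-negative integer $m$ with $\mathcal{N}(T^m)=\mathcal{N}(T^{m+1})$ ($\mathcal{N}$ = kernel, $T^0=I$), and $\infty$ if none exists. *)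

From HB Require Import structures.
From mathcomp Require Import all_boot all_order all_algebra.
From mathcomp Require Import all_classical all_reals all_analysis.
From mathcomp Require Import complex.

Set Implicit Arguments.
Unset Strict Implicit.
Unset Printing Implicit Defensive.

Import Order.TTheory GRing.Theory Num.Theory.
Local Open Scope classical_set_scope.
Local Open Scope ring_scope.

Section OrliczLorentz.
Context {R : realType} {d : measure_display} {T : measurableType d}.

Definition cmod (z : R[i]) : R :=
  Num.sqrt (complex.Re z ^+ 2 + complex.Im z ^+ 2).

Definition cmeasurable (f : T -> R[i]) : Prop :=
  measurable_fun setT (fun x => complex.Re (f x)) /\
  measurable_fun setT (fun x => complex.Im (f x)).

Definition young (phi : R -> R) : Prop :=
  [/\ (forall x y l, 0 <= x -> 0 <= y -> 0 <= l <= 1 ->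
         phi (l * x + (1 - l) * y) <= l * phi x + (1 - l) * phi y),
      (forall x, 0 <= x -> 0 <= phi x),
      (forall x, 0 <= x -> (phi x = 0 <-> x = 0)) &
      (forall M : R, exists N : R, forall x, N <= x -> M <= phi x)].

Definition delta2 (phi : R -> R) : Prop :=
  exists k : R, 0 < k /\ forall x, 0 < x -> phi (2 * x) <= k * phi x.

Definition weight (w : R -> R) : Prop :=
  [/\ (forall t, 0 < t -> 0 < w t),
      (forall s t, 0 < s -> s <= t -> w t <= w s),
      (forall t, 0 < t ->
         (\int[lebesgue_measure]_(x in `]0%R, t[) (w x)%:E < +oo)%E) &
      (\int[lebesgue_measure]_(x in `]0%R, +oo[) (w x)%:E = +oo)%E].

Definition phiE (phi : R -> R) (x : \bar R) : \bar R :=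
  match x with
  | r%:E => (phi r)%:E
  | +oo%E => +oo%E
  | -oo%E => 0%E
  end.

Definition distrib (mu : {measure set T -> \bar R}) (f : T -> R[i]) (s : R)
  : \bar R := mu [set x | s < cmod (f x)].

Definition decr (mu : {measure set T -> \bar R}) (f : T -> R[i]) (t : R)
  : \bar R :=
  ereal_inf [set s%:E | s in [set s : R | 0 < s /\ (distrib mu f s <= t%:E)%E]].

Definition OLmod (mu : {measure set T -> \bar R}) (phi w : R -> R)
  (a : R) (f : T -> R[i]) : \bar R :=
  (\int[lebesgue_measure]_(t in `]0%R, +oo[)
     (phiE phi (a%:E * decr mu f t) * (w t)%:E))%E.

Definition OL (mu : {measure set T -> \bar R}) (phi w : R -> R)
  (f : T -> R[i]) : Prop :=
  cmeasurable f /\ exists a : R, 0 < a /\ (OLmod mu phi w a f < +oo)%E.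

Definition lux (mu : {measure set T -> \bar R}) (phi w : R -> R)
  (f : T -> R[i]) : \bar R :=
  ereal_inf [set l%:E | l in
    [set l : R | 0 < l /\ (OLmod mu phi w l^-1 f <= 1)%E]].

Definition compop (Psi : T -> T) (f : T -> R[i]) : T -> R[i] := f \o Psi.

Definition compop_bounded (mu : {measure set T -> \bar R}) (phi w : R -> R)
  (Psi : T -> T) : Prop :=
  (forall f, OL mu phi w f -> OL mu phi w (compop Psi f)) /\
  exists M : R, 0 <= M /\
    forall f, OL mu phi w f ->
      (lux mu phi w (compop Psi f) <= M%:E * lux mu phi w f)%E.

Definition nonsingular (mu : {measure set T -> \bar R}) (Psi : T -> T) : Prop :=
  forall S, measurable S -> mu S = 0%E -> mu (Psi @^-1` S) = 0%E.

Definition prepositive (mu : {measure set T -> \bar R}) (Psi : T -> T) : Prop :=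
  forall A, measurable A -> (0 < mu A)%E -> (0 < mu (Psi @^-1` A))%E.

(* kernel of (C_Psi)^m in L_(phi,w) (elements modulo a.e. equality:
   f is in the kernel iff (C_Psi)^m f = 0 a.e.) *)
Definition kerC (mu : {measure set T -> \bar R}) (phi w : R -> R)
  (Psi : T -> T) (m : nat) : set (T -> R[i]) :=
  [set f | OL mu phi w f /\
           {ae mu, forall x, iter m (compop Psi) f x = 0}].

Definition ascent_eq (mu : {measure set T -> \bar R}) (phi w : R -> R)
  (Psi : T -> T) (m : nat) : Prop :=
  kerC mu phi w Psi m = kerC mu phi w Psi m.+1 /\
  forall k, (k < m)%N -> kerC mu phi w Psi k <> kerC mu phi w Psi k.+1.

End OrliczLorentz.

From HB Require Import structures.
From mathcomp Require Import all_boot all_order all_algebra.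
From mathcomp Require Import all_classical all_reals all_analysis.
From mathcomp Require Import complex.
Local Open Scope classical_set_scope.
Local Open Scope ring_scope.

Import Order.TTheory GRing.Theory Num.Theory.

(* A non-singular Psi pulls null sets back to null sets, so f = 0 a.e. implies
   f o Psi = 0 a.e.; a pre-positive Psi pulls no set of positive measure back
   to a null set, so f o Psi = 0 a.e. forces the measurable set {f <> 0} to be
   null.  Hence N(C_Psi) = N(I).  The hypotheses on phi, w, sigma-finiteness
   and boundedness only make C_Psi an operator on L_(phi,w); the argument
   does not use them. *)

Lemma measurable_funT_preimage {d d' : measure_display} {aT : measurableType d}
    {rT : measurableType d'} (f : aT -> rT) (B : set rT) :
  measurable_fun setT f -> measurable B -> measurable (f @^-1` B).
Proof. by move=> mf mB; rewrite -[f @^-1` B]setTI; exact: mf. Qed.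

Section pullback_ae.
Context {R : realType} {d : measure_display} {T : measurableType d}.
Context {mu : {measure set T -> \bar R}} {Psi : T -> T}.
Hypothesis mPsi : measurable_fun setT Psi.

Lemma nonsingular_ae_comp (P : T -> Prop) : nonsingular mu Psi ->
  {ae mu, forall x, P x} -> {ae mu, forall x, P (Psi x)}.
Proof.
move=> ns [N [mN N0 notPN]]; exists (Psi @^-1` N); split.
- exact: measurable_funT_preimage.
- exact: ns.
- by move=> x /= notPPsix; apply: notPN.
Qed.

Lemma prepositive_preimage_null (A : set T) : prepositive mu Psi ->
  measurable A -> mu (Psi @^-1` A) = 0%E -> mu A = 0%E.
Proof.
move=> pp mA PA0; apply/eqP; rewrite eq_le measure_ge0 andbT leNgt.
by apply/negP => /(pp _ mA); rewrite PA0 ltxx.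
Qed.

Lemma prepositive_ae_comp (D : set T) : prepositive mu Psi -> measurable D ->
  {ae mu, forall x, D (Psi x)} -> {ae mu, forall x, D x}.
Proof.
move=> pp mD aeDPsi; have mCD : measurable (~` D) by exact: measurableC.
apply/negligibleP => //; apply: prepositive_preimage_null => //.
by apply/negligibleP => //; exact: measurable_funT_preimage.
Qed.

End pullback_ae.

Lemma cmeasurable_zeroset {R : realType} {d : measure_display}
    {T : measurableType d} (f : T -> R[i]) :
  cmeasurable f -> measurable [set x | f x = 0].
Proof.
move=> [mRe mIm].
have -> : [set x | f x = 0] =
    (fun x => complex.Re (f x)) @^-1` [set 0] `&`
    (fun x => complex.Im (f x)) @^-1` [set 0].
  apply/seteqP; split => x /=; first by move->.
  by case: (f x) => a b /= [-> ->].
by apply: measurableI; apply: measurable_funT_preimage.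
Qed.

Theorem theorem3p7 (R : realType) (d : measure_display) (T : measurableType d)
  (mu : {measure set T -> \bar R}) (phi w : R -> R) (Psi : T -> T) :
  sigma_finite setT mu ->
  young phi -> delta2 phi -> weight w ->
  measurable_fun setT Psi -> nonsingular mu Psi ->
  compop_bounded mu phi w Psi ->
  prepositive mu Psi ->
  ascent_eq mu phi w Psi 0.
Proof.
move=> _ _ _ _ mPsi ns _ pp; split=> //.
rewrite /kerC; apply/seteqP; split=> f [OLf f0]; split=> //.
- exact: (nonsingular_ae_comp mPsi _ ns f0).
- apply: (prepositive_ae_comp mPsi _ pp) f0.
  exact: cmeasurable_zeroset OLf.1.
Qed.
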